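(* In the model and protocol $\mathrm{OciorABA}$ described in the context, with $n\ge 3t+1$, if every honest node receives an input message, then every honest node eventually outputs a value and terminates.
   Context: Model: there are $n$ nodes $\mathrm{Node}_1,\dots,\mathrm{Node}_n$ in an asynchronous network (every message sent between honest nodes is eventually delivered, with arbitrary adversarial delay). An adaptive adversary may corrupt at most $t$ nodes in total; $\mathcal F\subseteq[1:n]$ denotes the set of dishonest nodes; $n\ge 3t+1$. The symbol $\bot$ denotes ''missing''; for a vector $v\in\{0,1,\bot\}^n$ let $\mathcal M(v)=\{j\in[1:n]: v[j]\neq\bot\}$. Primitives used as black boxes: (RBC) For each $j\in[1:n]$ a reliable broadcast instance $\mathrm{RBC}_j$ with leader $\mathrm{Node}_j$, satisfying Consistency (two honest outputs are equal), Validity (if the leader is honest and inputs $w$, every honest node eventually outputs $w$), and Totality (if one honest node outputs a value, every honest node eventually outputs a value). (APVA) An asynchronous partial vector agreement instance: each honest $\mathrm{Node}_i$ holds an input vector $a_i\in\{0,1,\bot\}^n$, initially all $\bot$, whose entries may over time change from $\bot$ to a value in $\{0,1\}$ (and are then fixed); each node outputs at most one vector in $\{0,1,\bot\}^n$. It satisfies: Consistency (if an honest node outputs $v$, every honest node eventually outputs $v$); Validity (if an honest node outputs $v$, then for every $j$ with $v[j]\neq\bot$ some honest $\mathrm{Node}_i$ has input $a_i[j]=v[j]$, and $|\mathcal M(v)|\ge n-t$); Termination (if there is a set of at least $n-t$ positions at which all honest nodes have non-missing input entries, then every honest node eventually outputs a vector and terminates). (Erasure code) An $(n,t+1)$ erasure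 code: $\mathrm{Enc}(w)=(\mathrm{Enc}_1(w),\dots,\mathrm{Enc}_n(w))$ and $\mathrm{Dec}$ with $\mathrm{Dec}(\{\mathrm{Enc}_j(w)\}_{j\in K})=w$ for every $K\subseteq[1:n]$, $|K|=t+1$. Protocol $\mathrm{OciorABA}$, code for an honest $\mathrm{Node}_i$ with input message $w_i$: (1) Compute $(y^{(i)}_1,\dots,y^{(i)}_n)=\mathrm{Enc}(w_i)$ and input $y^{(i)}_i$ into $\mathrm{RBC}_i$ (as leader). (2) Upon delivery of $y^{(j)}_j$ from $\mathrm{RBC}_j$ (after step (1)), set $a_i[j]=1$ if $y^{(j)}_j=y^{(i)}_j$ and $a_i[j]=0$ otherwise, and pass $a_i[j]$ into APVA as the $j$-th entry of its input vector. (3) Upon APVA outputting $v$: let $S=\{j: v[j]=1\}$. If $|S|<t+1$, output a default value $\bot$ and terminate. Otherwise let $K$ be the $t+1$ smallest elements of $S$, wait for delivery of $y^{(j)}_j$ from $\mathrm{RBC}_j$ for all $j\in K$, output $\mathrm{Dec}(\{y^{(j)}_j\}_{j\in K})$ and terminate. *)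

From mathcomp Require Import all_boot.
Set Implicit Arguments. Unset Strict Implicit. Unset Printing Implicit Defensive.

(* A vector in {0,1,bot}^n is
   {ffun 'I_n -> option bool} (None = bot).
   For an execution we record, for honest node i and RBC instance j,
   deliv i j : option Y  -- Some y iff Node_i (eventually) delivers y from RBC_j,
   and apva_out i : option vector -- Some v iff Node_i (eventually) outputs v from APVA. *)

Section Model.
Variables (n t : nat) (W : Type) (Y : eqType).
Variable F : {set 'I_n}.
Definition honest (i : 'I_n) : bool := i \notin F.

Variable Enc : W -> 'I_n -> Y.
Variable Dec : {ffun 'I_n -> option Y} -> W.      (* Dec of the symbols at the Some-positions *)

Definition erasure_code_spec : Prop :=
  forall (w : W) (K : {set 'I_n}), #|K| = t.+1 ->
    Dec [ffun j => if j \in K then Some (Enc w j) else None] = w.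

Variable w : 'I_n -> W.                           (* input message of (honest) Node_i *)
Variable deliv : 'I_n -> 'I_n -> option Y.
Variable apva_out : 'I_n -> option {ffun 'I_n -> option bool}.

Definition nonmissing (v : {ffun 'I_n -> option bool}) : {set 'I_n} :=
  [set j | v j != None].

(* Step (2): the (eventual, entries fixed once set) APVA input vector a_i of honest Node_i. *)
Definition apva_in (i : 'I_n) : {ffun 'I_n -> option bool} :=
  [ffun j => omap (fun y => y == Enc (w i) j) (deliv i j)].

(* RBC properties; the leader input of an honest Node_j is Enc_j(w_j) by step (1). *)
Definition rbc_spec : Prop :=
  [/\
      (forall j i k y y', honest i -> honest k ->
          deliv i j = Some y -> deliv k j = Some y' -> y = y'),
      (forall j i, honest j -> honest i -> deliv i j = Some (Enc (w j) j))
    &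
      (forall j i k, honest i -> honest k -> deliv i j != None -> deliv k j != None)].

Definition apva_spec : Prop :=
  [/\
      (forall i k v, honest i -> honest k -> apva_out i = Some v -> apva_out k = Some v),
      (forall i v, honest i -> apva_out i = Some v ->
          (forall j, v j != None -> exists2 k, honest k & apva_in k j = v j)
          /\ n - t <= #|nonmissing v|)
    &
      ((exists P : {set 'I_n}, n - t <= #|P| /\
          forall j, j \in P -> forall i, honest i -> apva_in i j != None) ->
       forall i, honest i -> apva_out i != None)].

Definition smallest_t1 (S : {set 'I_n}) : {set 'I_n} :=
  [set j in S | #|[set k in S | (k < j)%N]| < t.+1].

(* Step (3): eventual output of honest Node_i.
   None = never outputs; Some None = outputs the default bot; Some (Some m) = outputs m. *)
Definition ocior_out (i : 'I_n) : option (option W) :=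
  match apva_out i with
  | None => None
  | Some v =>
      let S := [set j | v j == Some true] in
      if #|S| < t.+1 then Some None
      else let K := smallest_t1 S in
        if [forall j in K, deliv i j != None]
        then Some (Some (Dec [ffun j => if j \in K then deliv i j else None]))
        else None
  end.
End Model.

From mathcomp Require Import all_boot.

(* The honest nodes form a set of at least n - t positions at which every
   honest APVA input is eventually set (RBC validity), so APVA terminates.
   Each position j with v[j] = 1 in its output carries the input of some
   honest node, hence that node delivered from RBC_j, and by totality so does
   every honest node; thus the wait in step (3) ends. *)

Set Implicit Arguments.
Unset Strict Implicit.
Unset Printing Implicit Defensive.

Section Termination.
Variables (n t : nat) (W : Type) (Y : eqType) (F : {set 'I_n}).
Variable Enc : W -> 'I_n -> Y.
Variables (w : 'I_n -> W) (deliv : 'I_n -> 'I_n -> option Y).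
Variable apva_out : 'I_n -> option {ffun 'I_n -> option bool}.

Hypothesis rbcP : rbc_spec F Enc w deliv.
Hypothesis apvaP : apva_spec t F Enc w deliv apva_out.

Lemma card_honest_ge : #|F| <= t -> n - t <= #|~: F|.
Proof. by move=> hF; rewrite cardsCs setCK card_ord leq_sub2l. Qed.

Lemma apva_in_honest_leader j i :
  honest F j -> honest F i -> apva_in Enc w deliv i j != None.
Proof. by case: rbcP => _ rval _ hj hi; rewrite /apva_in ffunE (rval j i hj hi). Qed.

Lemma apva_out_honest i : #|F| <= t -> honest F i -> apva_out i != None.
Proof.
case: apvaP => _ _ aterm hF; apply: aterm; exists (~: F); split.
  exact: card_honest_ge.
by move=> j; rewrite in_setC => hj k hk; rewrite apva_in_honest_leader.
Qed.

Lemma deliv_apva_out_nonmissing i k v j :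
  honest F i -> honest F k -> apva_out k = Some v -> v j != None ->
  deliv i j != None.
Proof.
case: rbcP => _ _ rtot; case: apvaP => _ aval _ hi hk Ev vj.
have [l hl] := (aval k v hk Ev).1 j vj.
rewrite /apva_in ffunE => ajl; apply: (rtot j l i hl hi).
by move: vj; rewrite -ajl; case: (deliv l j).
Qed.

End Termination.

Theorem theorem4 (n t : nat) (W : Type) (Y : eqType) (F : {set 'I_n})
    (Enc : W -> 'I_n -> Y) (Dec : {ffun 'I_n -> option Y} -> W)
    (w : 'I_n -> W) (deliv : 'I_n -> 'I_n -> option Y)
    (apva_out : 'I_n -> option {ffun 'I_n -> option bool}) :
  3 * t + 1 <= n ->
  #|F| <= t ->
  erasure_code_spec t Enc Dec ->
  rbc_spec F Enc w deliv ->
  apva_spec t F Enc w deliv apva_out ->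
  forall i : 'I_n, honest F i -> ocior_out t Dec deliv apva_out i <> None.
Proof.
move=> _ hF _ rbcP apvaP i hi.
have := apva_out_honest rbcP apvaP hF hi.
rewrite /ocior_out; case Ev: (apva_out i) => [v|] // _.
case: ifP => // _.
have Kdeliv j : j \in smallest_t1 t [set j | v j == Some true] -> deliv i j != None.
  rewrite !inE => /andP[/eqP vj _].
  by apply: (deliv_apva_out_nonmissing rbcP apvaP hi hi Ev); rewrite vj.
by case: ifP => // /negP[]; apply/forall_inP.
Qed.
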